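(* Let $M,N\ge3$ be integers with $M$ divisible by $(7^{N+1})!$. Let $I_1$ be the sequence consisting of $N$ batches of $M$ identical items each, with item sizes $\frac1{7^N},\frac1{7^{N-1}},\dots,\frac17$ in this order. Let $J_3$ be $I_1$ followed by $M$ items of size $\frac13$; let $J_2$ be $J_3$ followed by $M$ items of size $\frac12$; let $J_{22}$ be $J_3$ followed by $2M$ items of size $\frac12$; and let $J_1$ be $J_2$ followed by $M$ items of size $1$. Then $\mathrm{OPT}(J_3)\le\frac{3M}8$, $\mathrm{OPT}(J_2)\le\frac{2M}3$, $\mathrm{OPT}(J_{22})\le M$ and $\mathrm{OPT}(J_1)\le M$.
   Context: Ordered Open End Bin Packing: a sequence of items with sizes in $(0,1]$ must be packed into bins in sequence order, where an item may be added to a bin only if the bin's current total size is strictly below $1$; equivalently, in each bin the total size of all items except the one appearing last in the sequence is strictly below $1$. $\mathrm{OPT}(I)$ is the minimum number of bins of such a packing of the sequence $I$. *)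

From mathcomp Require Import all_boot all_order all_algebra.
Set Implicit Arguments. Unset Strict Implicit. Unset Printing Implicit Defensive.
Import Order.TTheory GRing.Theory Num.Theory.
Local Open Scope ring_scope.

(* A packing of the item sequence [s] (sizes in rat) into [k] bins is an
   assignment [f] of each item (by position) to a bin.  It is valid for
   Ordered Open End Bin Packing iff in every bin, the total size of all items
   except the one appearing last in the sequence is strictly below 1, i.e. the
   sum over the items i of bin b for which some later item j of the sequence
   is also in bin b is < 1. *)
Definition oe_valid (s : seq rat) (k : nat) (f : {ffun 'I_(size s) -> 'I_k}) : bool :=
  [forall b : 'I_k,
     (\sum_(i < size s | (f i == b) && [exists j : 'I_(size s), (f j == b) && (i < j)%N])
        s`_i) < 1].

Definition oe_packable (s : seq rat) (k : nat) : bool :=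
  [exists f : {ffun 'I_(size s) -> 'I_k}, oe_valid f].

Lemma oe_packable_size (s : seq rat) : oe_packable s (size s).
Proof.
apply/existsP; exists [ffun i => i]; apply/forallP => b.
rewrite big1 ?ltr01 // => i /andP[/eqP] ; rewrite ffunE => -> /existsP[j].
by rewrite ffunE => /andP[/eqP -> ]; rewrite ltnn.
Qed.

Lemma oe_packable_ex (s : seq rat) : exists k, oe_packable s k.
Proof. by exists (size s); apply: oe_packable_size. Qed.

Definition OPT (s : seq rat) : nat := ex_minn (oe_packable_ex s).

Definition I1 (M N : nat) : seq rat :=
  flatten [seq nseq M ((7 ^+ (N - k))^-1 : rat) | k <- iota 0 N].

Definition J3 (M N : nat) : seq rat := I1 M N ++ nseq M (3^-1).
Definition J2 (M N : nat) : seq rat := J3 M N ++ nseq M (2^-1).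
Definition J22 (M N : nat) : seq rat := J3 M N ++ nseq (2 * M) (2^-1).
Definition J1 (M N : nat) : seq rat := J2 M N ++ nseq M 1.

(* Each bound is witnessed by an explicit packing.  A bin is feasible iff its
   load minus its last item is below 1.  The bins come in M/G groups of C
   bins, and each batch of M equal items is spread over the groups by one
   colour pattern of length G, so a bin receives a fixed number of items from
   every batch and its content is easy to read off.  Since the sizes 1/7^N,
   ..., 1/7 sum to less than 1/6, a bin taking k items from every batch of I1
   carries less than k/6 from I1.  With (G, C) = (8, 3), bins taking (2, 3),
   (2, 3) and (4, 2) items of I1 and of the thirds pack J3 into 3M/8 bins;
   with (G, C) = (3, 2), bins taking (2, 2, 1) and (1, 1, 2) items of I1, of
   the thirds and of the halves pack J2 into 2M/3 bins; one item of every
   batch per bin packs J22 and J1 into M bins. *)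

From mathcomp Require Import all_boot all_order all_algebra.
From mathcomp Require Import zify lra.
Set Implicit Arguments. Unset Strict Implicit. Unset Printing Implicit Defensive.
Import Order.TTheory GRing.Theory Num.Theory.
Local Open Scope ring_scope.

Lemma OPT_le_packable (s : seq rat) (k : nat) : oe_packable s k -> (OPT s <= k)%N.
Proof. by rewrite /OPT; case: ex_minnP => m _; apply. Qed.

Definition bin_content (L : seq (rat * nat)) (b : nat) : seq rat :=
  [seq x.1 | x <- L & x.2 == b].

Lemma bin_content_split_last (L : seq (rat * nat)) (b T : nat) (x0 : rat * nat) :
  (T < size L)%N -> (nth x0 L T).2 = b ->
  (forall j, (T < j < size L)%N -> (nth x0 L j).2 != b) ->
  bin_content L b = rcons (bin_content (take T L) b) (nth x0 L T).1.
Proof.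
move=> TL labT no_b_after_T.
have no_b_after : bin_content (drop T.+1 L) b = [::].
  apply/eqP; rewrite -size_eq0 size_map size_filter -leqn0 leqNgt -has_count.
  apply/(has_nthP x0) => -[j]; rewrite size_drop nth_drop => jL.
  by apply/negP/no_b_after_T; lia.
rewrite -[in LHS](cat_take_drop T L) (drop_nth x0 TL) /bin_content.
rewrite filter_cat map_cat /= labT eqxx /=.
by move: no_b_after; rewrite /bin_content => ->; rewrite cats1.
Qed.

Lemma sum_bin_content_take (L : seq (rat * nat)) (b T : nat) (x0 : rat * nat) :
  (T <= size L)%N ->
  \sum_(y <- bin_content (take T L) b) y
    = \sum_(0 <= i < size L | ((nth x0 L i).2 == b) && (i < T)%N) (nth x0 L i).1.
Proof.
move=> TL; rewrite -big_nat_widen // big_map big_filter (big_nth x0) size_takel //.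
rewrite big_mkcond [RHS]big_mkcond; apply: eq_big_nat => i /andP[_ iT]; by rewrite nth_take.
Qed.

Lemma oe_packable_labelled (L : seq (rat * nat)) (k : nat) :
  all (fun x => x.2 < k)%N L ->
  (forall b, (b < k)%N -> \sum_(y <- bin_content L b) y - last 0 (bin_content L b) < 1) ->
  oe_packable (unzip1 L) k.
Proof.
move=> lab_lt fit; set x0 := (0 : rat, 0%N).
have sizeL : size (unzip1 L) = size L by rewrite size_map.
have lab_ord (i : 'I_(size (unzip1 L))) : ((nth x0 L i).2 < k)%N.
  by apply: (allP lab_lt); rewrite mem_nth // -sizeL.
apply/existsP; exists [ffun i => Ordinal (lab_ord i)]; apply/forallP => b.
set f := [ffun i => Ordinal (lab_ord i)].
have fE i : (f i == b) = ((nth x0 L i).2 == b) by rewrite ffunE.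
case: (boolP [exists i, f i == b]) => [/existsP[i0 fi0] | /existsPn no_b]; last first.
  by rewrite big1 ?ltr01 // => i /andP[fi _]; move: (no_b i); rewrite fi.
pose P j := (j < size L)%N && ((nth x0 L j).2 == b).
have exP : exists j, P j by exists i0; rewrite /P -sizeL ltn_ord -fE.
have ubP j : P j -> (j <= size L)%N by case/andP=> /ltnW.
case: (ex_maxnP exP ubP) => T /andP[TL /eqP labT] Tmax.
have no_b_after_T j : (T < j < size L)%N -> (nth x0 L j).2 != b.
  by case/andP=> Tj jL; apply: contraTN Tj => lab_j; rewrite -leqNgt Tmax // /P jL.
have has_later_mate (i : 'I_(size (unzip1 L))) :
    [exists j, (f j == b) && (i < j)%N] = (i < T)%N.
  apply/existsP/idP => [[j /andP[fj ij]] | iT].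
    by apply: leq_trans ij (Tmax _ _); rewrite /P -sizeL ltn_ord -fE.
  have TL' : (T < size (unzip1 L))%N by rewrite sizeL.
  by exists (Ordinal TL'); rewrite fE labT eqxx iT.
have := fit b (ltn_ord b).
rewrite (bin_content_split_last TL labT no_b_after_T) last_rcons -cats1 big_cat big_seq1 /= addrK.
rewrite (sum_bin_content_take _ x0 (ltnW TL)) -sizeL big_mkord.
rewrite (eq_bigr (fun i : 'I_ _ => (unzip1 L)`_i)) => [|i _]; last first.
  by rewrite (nth_map x0) // -sizeL.
move=> fit_b; apply: le_lt_trans fit_b.
by under eq_bigl => i do rewrite fE has_later_mate.
Qed.

Lemma map_const_nseq (T S : Type) (y : S) (s : seq T) : [seq y | _ <- s] = nseq (size s) y.
Proof. by elim: s => //= _ s ->. Qed.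

Definition labelled_batches (bs : seq (rat * seq nat)) : seq (rat * nat) :=
  [seq (x.1, b) | x <- bs, b <- x.2].

Lemma unzip1_labelled_batches (bs : seq (rat * seq nat)) :
  unzip1 (labelled_batches bs) = flatten [seq nseq (size x.2) x.1 | x <- bs].
Proof.
rewrite /unzip1 /labelled_batches map_flatten -map_comp.
congr flatten; apply: eq_map => x /=.
by rewrite -map_comp map_const_nseq.
Qed.

Lemma bin_content_labelled_batches (bs : seq (rat * seq nat)) (b : nat) :
  bin_content (labelled_batches bs) b = flatten [seq nseq (count_mem b x.2) x.1 | x <- bs].
Proof.
rewrite /bin_content /labelled_batches filter_flatten map_flatten -!map_comp.
congr flatten; apply: eq_map => x /=.
by rewrite filter_map -map_comp map_const_nseq size_filter.
Qed.

Lemma last_nseqS (T : Type) (x y : T) (n : nat) : last x (nseq n.+1 y) = y.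
Proof. by elim: n. Qed.

Lemma sum_flatten_nseq (T : Type) (R : nmodType) (s : seq T) (n : T -> nat) (v : T -> R) :
  \sum_(y <- flatten [seq nseq (n x) (v x) | x <- s]) y = \sum_(x <- s) v x *+ n x.
Proof. by rewrite big_flatten big_map; apply: eq_bigr => x _; rewrite big_nseq iter_addr_0. Qed.

Lemma oe_packable_batches (k : nat) (bs : seq (rat * seq nat)) (v : rat) (pat : seq nat) :
  all (fun x => all (fun b => b < k)%N x.2) (rcons bs (v, pat)) ->
  (forall b, (b < k)%N ->
     b \in pat /\ \sum_(x <- rcons bs (v, pat)) x.1 *+ count_mem b x.2 - v < 1) ->
  oe_packable (flatten [seq nseq (size x.2) x.1 | x <- rcons bs (v, pat)]) k.
Proof.
move=> lt_k fit; rewrite -unzip1_labelled_batches; apply: oe_packable_labelled.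
  apply/allP => y /allpairsPdep[x [b [x_bs b_x ->]]].
  exact: (allP (allP lt_k x x_bs)).
move=> b bk; have [b_pat load] := fit b bk.
rewrite bin_content_labelled_batches sum_flatten_nseq map_rcons flatten_rcons last_cat.
by move: b_pat; rewrite -has_pred1 has_count; case: (count_mem b pat) => // n _; rewrite last_nseqS.
Qed.

Lemma eqn_mulD_small (C q p c' c : nat) : (c' < C)%N -> (c < C)%N ->
  (C * q + c' == C * p + c)%N = (q == p) && (c' == c).
Proof.
move=> c'C cC; apply/eqP/andP => [e|[/eqP-> /eqP->]] //.
have c'c : c' = c by move: (congr1 (modn^~ C) e); rewrite /= !(mulnC C) !modnMDl !modn_small.
by move: e; rewrite c'c => /addIn/eqP; rewrite eqn_mul2l eqn0Ngt (leq_ltn_trans _ cC).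
Qed.

Definition copies (t C : nat) (pat : seq nat) : seq nat :=
  [seq C * p + c | p <- iota 0 t, c <- pat]%N.

Lemma size_copies (t C : nat) (pat : seq nat) : size (copies t C pat) = (t * size pat)%N.
Proof. by rewrite size_allpairs size_iota. Qed.

Lemma copies_lt (t C : nat) (pat : seq nat) :
  all (fun c => c < C)%N pat -> all (fun b => b < C * t)%N (copies t C pat).
Proof.
move=> /allP pat_lt; apply/allP => _ /allpairsP[[p c] [/= p_t /pat_lt c_C ->]].
by move: p_t; rewrite mem_iota => /= p_t; nia.
Qed.

Lemma mem_copies (t C p c : nat) (pat : seq nat) :
  (p < t)%N -> c \in pat -> (C * p + c)%N \in copies t C pat.
Proof. by move=> p_t c_pat; apply: allpairs_f; rewrite // mem_iota. Qed.

Lemma count_mem_copies (t C p c : nat) (pat : seq nat) :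
  (p < t)%N -> (c < C)%N -> all (fun c' => c' < C)%N pat ->
  count_mem (C * p + c)%N (copies t C pat) = count_mem c pat.
Proof.
move=> p_t c_C /allP pat_lt.
have count_block q :
    count_mem (C * p + c)%N [seq C * q + c' | c' <- pat]%N = ((q == p) * count_mem c pat)%N.
  rewrite count_map [LHS](@eq_in_count _ _ (fun c' => (q == p) && (c' == c))); last first.
    by move=> c' /pat_lt c'_C; rewrite /= eqn_mulD_small.
  by case: eqP => _; rewrite ?mul1n ?mul0n ?count_pred0.
rewrite count_flatten -map_comp (eq_map count_block).
have -> s : sumn [seq (q == p) * count_mem c pat | q <- s]%N
             = (count_mem p s * count_mem c pat)%N.
  by elim: s => //= q s ->; rewrite mulnDl.
by rewrite count_uniq_mem ?iota_uniq // mem_iota p_t mul1n.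
Qed.

Definition I1_sizes (N : nat) : seq rat := [seq (7 ^+ (N - k))^-1 | k <- iota 0 N].

Lemma I1E (M N : nat) : I1 M N = flatten [seq nseq M u | u <- I1_sizes N].
Proof. by rewrite /I1 -map_comp. Qed.

Lemma sum_I1_sizesS (N : nat) :
  \sum_(u <- I1_sizes N.+1) u = (\sum_(u <- I1_sizes N) u + 1) / 7.
Proof.
have iotaSr : iota 0 N.+1 = rcons (iota 0 N) N by rewrite -cats1 -addn1 iotaD.
rewrite /I1_sizes iotaSr map_rcons -cats1 big_cat big_seq1 subSnn expr1 mulrDl div1r.
rewrite !big_map big_distrl /=; congr (_ + _); apply: eq_big_seq => k.
by rewrite mem_iota => /= k_N; rewrite subSn ?(ltnW k_N) // exprSr invfM.
Qed.

Lemma sum_I1_sizes_lt (N : nat) : \sum_(u <- I1_sizes N) u < 6^-1.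
Proof.
elim: N => [|N IH]; first by rewrite /I1_sizes big_nil.
by rewrite sum_I1_sizesS ltr_pdivrMr //; lra.
Qed.

Lemma oe_packable_I1_cat (N t C : nat) (patI : seq nat) (tl : seq (rat * seq nat))
    (v : rat) (pat : seq nat) :
  all (fun c => c < C)%N patI ->
  all (fun x => all (fun c => c < C)%N x.2) (rcons tl (v, pat)) ->
  (forall c, (c < C)%N -> [/\ c \in patI, c \in pat &
     (count_mem c patI)%:R / 6 + \sum_(x <- rcons tl (v, pat)) x.1 *+ count_mem c x.2 - v
       <= 1]) ->
  oe_packable (I1 (t * size patI) N ++
               flatten [seq nseq (t * size x.2) x.1 | x <- rcons tl (v, pat)]) (C * t).
Proof.
move=> patI_lt tl_lt fit.
pose cp (x : rat * seq nat) := (x.1, copies t C x.2).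
pose bs := [seq (u, copies t C patI) | u <- I1_sizes N] ++ map cp tl.
have -> : I1 (t * size patI) N ++
          flatten [seq nseq (t * size x.2) x.1 | x <- rcons tl (v, pat)]
        = flatten [seq nseq (size x.2) x.1 | x <- rcons bs (cp (v, pat))].
  rewrite rcons_cat -map_rcons map_cat flatten_cat I1E -!map_comp.
  by congr (flatten _ ++ flatten _); apply: eq_map => x /=; rewrite size_copies.
apply: oe_packable_batches.
  rewrite rcons_cat -map_rcons all_cat !all_map.
  apply/andP; split; apply/allP => x x_in /=; apply: copies_lt => //.
  exact: (allP tl_lt).
move=> b b_Ct; have C_gt0 : (0 < C)%N by move: b_Ct; rewrite lt0n; case: eqP => // ->.
have p_t : (b %/ C < t)%N by rewrite ltn_divLR // mulnC.
have c_C : (b %% C < C)%N by rewrite ltn_mod.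
have b_def : b = (C * (b %/ C) + b %% C)%N by rewrite mulnC -divn_eq.
set c := (b %% C)%N in c_C b_def *; have [c_patI c_pat fit_c] := fit _ c_C.
have count_b pt : all (fun c => c < C)%N pt -> count_mem b (copies t C pt) = count_mem c pt.
  by move=> pt_lt; rewrite b_def count_mem_copies.
rewrite b_def mem_copies //; split => //; rewrite -b_def.
rewrite rcons_cat big_cat -map_rcons [X in _ + X - _]big_map big_map /= count_b //.
rewrite (eq_big_seq (fun x => x.1 *+ count_mem c x.2)) => [|x x_in]; last first.
  by rewrite count_b //; apply: (allP tl_lt).
have I1_load : (\sum_(u <- I1_sizes N) u) *+ count_mem c patI < (count_mem c patI)%:R / 6.
  by rewrite mulrC mulr_natr ltr_pMn2r ?sum_I1_sizes_lt // -has_count has_pred1.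
rewrite sumrMnl; lra.
Qed.

Lemma J3_packable (t N : nat) : oe_packable (J3 (t * 8) N) (3 * t).
Proof.
have -> : J3 (t * 8) N = I1 (t * size [:: 0; 0; 1; 1; 2; 2; 2; 2]%N) N ++
    flatten [seq nseq (t * size x.2) x.1 | x <- rcons [::] (3^-1, [:: 0; 0; 0; 1; 1; 1; 2; 2]%N)].
  by rewrite /J3 [flatten _]cats0.
apply: oe_packable_I1_cat => [//|//|]; case=> [|[|[|c]]] c_lt; last by [].
all: split; [by [] | by [] | rewrite big_seq1 /=; lra].
Qed.

Lemma J2_packable (t N : nat) : oe_packable (J2 (t * 3) N) (2 * t).
Proof.
have -> : J2 (t * 3) N = I1 (t * size [:: 0; 0; 1]%N) N ++
    flatten [seq nseq (t * size x.2) x.1 |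
             x <- rcons [:: (3^-1, [:: 0; 0; 1]%N)] (2^-1, [:: 0; 1; 1]%N)].
  by rewrite /J2 /J3 [flatten _]/= cats0 catA.
apply: oe_packable_I1_cat => [//|//|]; case=> [|[|c]] c_lt; last by [].
all: split; [by [] | by [] | rewrite big_cons big_seq1 /=; lra].
Qed.

Lemma J22_packable (M N : nat) : oe_packable (J22 M N) M.
Proof.
have -> : J22 M N = I1 (M * size [:: 0%N]) N ++
    flatten [seq nseq (M * size x.2) x.1 |
             x <- rcons [:: (3^-1, [:: 0%N]); (2^-1, [:: 0%N])] (2^-1, [:: 0%N])].
  by rewrite /J22 /J3 [flatten _]/= !muln1 cats0 mul2n -addnn nseqD -!catA.
rewrite -[X in oe_packable _ X]mul1n.
apply: oe_packable_I1_cat => [//|//|]; case=> [|c] c_lt; last by [].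
by split; [by [] | by [] | rewrite !big_cons big_nil /=; lra].
Qed.

Lemma J1_packable (M N : nat) : oe_packable (J1 M N) M.
Proof.
have -> : J1 M N = I1 (M * size [:: 0%N]) N ++
    flatten [seq nseq (M * size x.2) x.1 |
             x <- rcons [:: (3^-1, [:: 0%N]); (2^-1, [:: 0%N])] (1, [:: 0%N])].
  by rewrite /J1 /J2 /J3 [flatten _]/= !muln1 cats0 -!catA.
rewrite -[X in oe_packable _ X]mul1n.
apply: oe_packable_I1_cat => [//|//|]; case=> [|c] c_lt; last by [].
by split; [by [] | by [] | rewrite !big_cons big_nil /=; lra].
Qed.

Theorem mainTheorem11 (M N : nat) :
  (3 <= M)%N -> (3 <= N)%N -> ((7 ^ N.+1)`! %| M)%N ->
  [/\ (OPT (J3 M N))%:R <= (3 * M)%:R / 8 :> rat,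
      (OPT (J2 M N))%:R <= (2 * M)%:R / 3 :> rat,
      (OPT (J22 M N) <= M)%N
    & (OPT (J1 M N) <= M)%N].
Proof.
move=> _ N_ge3 fact_dvd_M.
have dvd_M d : (0 < d <= 8)%N -> (d %| M)%N.
  move=> /andP[d_gt0 d_le8]; apply: dvdn_trans fact_dvd_M; rewrite dvdn_fact // d_gt0.
  by rewrite (leq_trans d_le8) // (@leq_trans (7 ^ 2)) // leq_pexp2l //; lia.
split; last 2 first.
- exact/OPT_le_packable/J22_packable.
- exact/OPT_le_packable/J1_packable.
- rewrite -(divnK (dvd_M 8%N isT)) mulnA natrM mulfK // ler_nat.
  exact/OPT_le_packable/J3_packable.
- rewrite -(divnK (dvd_M 3%N isT)) mulnA natrM mulfK // ler_nat.
  exact/OPT_le_packable/J2_packable.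
Qed.
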